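(* Let $F$ be a semi-safe sentence and let $\mathbf c$ be a finite set of object constants containing every object constant occurring in $F$. Then $F$ entails $F^*(\mathbf e_{\mathbf c})$.
   Context: Formulas are first-order formulas with object constants, predicate constants and equality but no function constants of arity $>0$; primitive connectives are $\bot,\land,\lor,\rightarrow$ and quantifiers $\forall,\exists$ ($\neg F$ is $F\rightarrow\bot$, $\top$ is $\bot\rightarrow\bot$). A sentence is a formula without free variables. Let $\mathbf p=p_1,\dots,p_n$ be the predicate constants occurring in $F$ and $\mathbf u=u_1,\dots,u_n$ predicate variables of matching arities. $F^*(\mathbf u)$ is defined recursively: $p_i(\mathbf t)^*=u_i(\mathbf t)$; $(t_1=t_2)^*=(t_1=t_2)$; $\bot^*=\bot$; $(G\land H)^*=G^*\land H^*$; $(G\lor H)^*=G^*\lor H^*$; $(G\rightarrow H)^*=(G^*\rightarrow H^* )\land(G\rightarrow H)$; $(\forall xG)^*=\forall xG^*$; $(\exists xG)^*=\exists xG^*$. For a finite set $\mathbf c$ of object constants, $\mathit{in}_{\mathbf c}(x_1,\dots,x_m)$ denotes $\bigwedge_{1\le j\le m}\bigvee_{c\in\mathbf c}x_j=c$. $\mathbf e_{\mathbf c}$ denotes the list of predicate expressions $\lambda\mathbf x(p_i(\mathbf x)\land\mathit{in}_{\mathbf c}(\mathbf x))$, and $F^*(\mathbf e_{\mathbf c})$ is the result of replacing each atomic part $u_i(\mathbf t)$ of $F^*(\mathbf u)$ by $p_i(\mathbf t)\land\mathit{in}_{\mathbf c}(\mathbf t)$ (renaming bound variables if necessary). Restricted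 variables: $\mathrm{RV}(G)$ for quantifier-free $G$: if $G$ is an equality between two variables, $\mathrm{RV}(G)=\emptyset$; if $G$ is any other atomic formula, $\mathrm{RV}(G)$ is the set of variables occurring in $G$; $\mathrm{RV}(\bot)=\emptyset$; $\mathrm{RV}(G\land H)=\mathrm{RV}(G)\cup\mathrm{RV}(H)$; $\mathrm{RV}(G\lor H)=\mathrm{RV}(G)\cap\mathrm{RV}(H)$; $\mathrm{RV}(G\rightarrow H)=\emptyset$. An occurrence is strictly positive if it is not in the antecedent of any implication. A sentence in prenex form $Q_1x_1\cdots Q_nx_nM$ ($M$ quantifier-free, $x_i$ distinct) is semi-safe if every strictly positive occurrence of every variable $x_i$ in $M$ belongs to a subformula $G\rightarrow H$ of $M$ with $x_i\in\mathrm{RV}(G)$. *)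

From Stdlib Require Import List Arith Bool.
Import ListNotations.

Inductive term : Type :=
| Var : nat -> term
| Cst : nat -> term.

(* Formulas.  [Pred p ts] is an atom built from predicate constant p;
   [PVar p ts] is an atom built from the predicate variable u_p that
   corresponds to p (only used in F^*(u)).  A predicate constant is
   identified by its name together with the length of its argument list. *)
Inductive form : Type :=
| Bot : form
| Eq : term -> term -> form
| Pred : nat -> list term -> form
| PVar : nat -> list term -> form
| And : form -> form -> form
| Or : form -> form -> form
| Imp : form -> form -> form
| All : nat -> form -> form
| Ex : nat -> form -> form.

Definition Top : form := Imp Bot Bot.

Definition term_vars (t : term) : list nat :=
  match t with Var x => [x] | Cst _ => [] end.

Definition term_csts (t : term) : list nat :=
  match t with Var _ => [] | Cst k => [k] end.

Fixpoint free_vars (F : form) : list nat :=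
  match F with
  | Bot => []
  | Eq t1 t2 => term_vars t1 ++ term_vars t2
  | Pred _ ts | PVar _ ts => flat_map term_vars ts
  | And G H | Or G H | Imp G H => free_vars G ++ free_vars H
  | All x G | Ex x G => filter (fun y => negb (Nat.eqb y x)) (free_vars G)
  end.

Definition sentence (F : form) : Prop := free_vars F = [].

Fixpoint consts (F : form) : list nat :=
  match F with
  | Bot => []
  | Eq t1 t2 => term_csts t1 ++ term_csts t2
  | Pred _ ts | PVar _ ts => flat_map term_csts ts
  | And G H | Or G H | Imp G H => consts G ++ consts H
  | All _ G | Ex _ G => consts G
  end.

Fixpoint pvar_free (F : form) : Prop :=
  match F with
  | PVar _ _ => False
  | And G H | Or G H | Imp G H => pvar_free G /\ pvar_free H
  | All _ G | Ex _ G => pvar_free G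
  | _ => True
  end.

Fixpoint quantifier_free (F : form) : Prop :=
  match F with
  | And G H | Or G H | Imp G H => quantifier_free G /\ quantifier_free H
  | All _ _ | Ex _ _ => False
  | _ => True
  end.

Fixpoint star (F : form) : form :=
  match F with
  | Pred p ts => PVar p ts
  | PVar p ts => PVar p ts
  | Eq t1 t2 => Eq t1 t2
  | Bot => Bot
  | And G H => And (star G) (star H)
  | Or G H => Or (star G) (star H)
  | Imp G H => And (Imp (star G) (star H)) (Imp G H)
  | All x G => All x (star G)
  | Ex x G => Ex x (star G)
  end.

Fixpoint big_or (l : list form) : form :=
  match l with [] => Bot | [A] => A | A :: l' => Or A (big_or l') end.
Fixpoint big_and (l : list form) : form :=
  match l with [] => Top | [A] => A | A :: l' => And A (big_and l') end.

Definition in_c (c : list nat) (ts : list term) : form :=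
  big_and (map (fun t => big_or (map (fun k => Eq t (Cst k)) c)) ts).

(* replace every atom u_p(t) by p(t) /\ in_c(t); no variable capture can
   occur since in_c(t) introduces no new variables. *)
Fixpoint subst_e (c : list nat) (F : form) : form :=
  match F with
  | PVar p ts => And (Pred p ts) (in_c c ts)
  | Pred p ts => Pred p ts
  | Eq t1 t2 => Eq t1 t2
  | Bot => Bot
  | And G H => And (subst_e c G) (subst_e c H)
  | Or G H => Or (subst_e c G) (subst_e c H)
  | Imp G H => Imp (subst_e c G) (subst_e c H)
  | All x G => All x (subst_e c G)
  | Ex x G => Ex x (subst_e c G)
  end.

Definition star_e (c : list nat) (F : form) : form := subst_e c (star F).

Definition both_vars (t1 t2 : term) : bool :=
  match t1, t2 with Var _, Var _ => true | _, _ => false end.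

Fixpoint in_RV (x : nat) (G : form) : bool :=
  match G with
  | Bot => false
  | Eq t1 t2 =>
      if both_vars t1 t2 then false
      else existsb (Nat.eqb x) (term_vars t1 ++ term_vars t2)
  | Pred _ ts | PVar _ ts => existsb (Nat.eqb x) (flat_map term_vars ts)
  | And G H => in_RV x G || in_RV x H
  | Or G H => in_RV x G && in_RV x H
  | Imp _ _ => false
  | All _ _ | Ex _ _ => false
  end.

(* [unprotected x M]: M has a strictly positive occurrence of x that does
   not belong to any subformula G -> H of M with x \in RV(G). *)
Fixpoint unprotected (x : nat) (M : form) : bool :=
  match M with
  | Bot => false
  | Eq t1 t2 => existsb (Nat.eqb x) (term_vars t1 ++ term_vars t2)
  | Pred _ ts | PVar _ ts => existsb (Nat.eqb x) (flat_map term_vars ts)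
  | And G H | Or G H => unprotected x G || unprotected x H
  | Imp G H => if in_RV x G then false else unprotected x H
  | All _ G | Ex _ G => unprotected x G
  end.

Inductive quant : Type := QAll | QEx.

Definition prenex (pre : list (quant * nat)) (M : form) : form :=
  fold_right (fun qx G => match fst qx with
                          | QAll => All (snd qx) G
                          | QEx => Ex (snd qx) G end) M pre.

Definition semi_safe (F : form) : Prop :=
  sentence F /\
  exists (pre : list (quant * nat)) (M : form),
    F = prenex pre M /\ quantifier_free M /\ NoDup (map snd pre) /\
    forall x, In x (map snd pre) -> unprotected x M = false.

Record model : Type := {
  dom : Type;
  dom_inh : dom;
  cst : nat -> dom;
  prd : nat -> list dom -> Prop;
  pvr : nat -> list dom -> Prop
}.

Definition upd {D : Type} (env : nat -> D) (x : nat) (d : D) : nat -> D :=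
  fun y => if Nat.eqb y x then d else env y.

Definition teval (M : model) (env : nat -> dom M) (t : term) : dom M :=
  match t with Var x => env x | Cst k => cst M k end.

Fixpoint sat (M : model) (env : nat -> dom M) (F : form) : Prop :=
  match F with
  | Bot => False
  | Eq t1 t2 => teval M env t1 = teval M env t2
  | Pred p ts => prd M p (map (teval M env) ts)
  | PVar p ts => pvr M p (map (teval M env) ts)
  | And G H => sat M env G /\ sat M env H
  | Or G H => sat M env G \/ sat M env H
  | Imp G H => sat M env G -> sat M env H
  | All x G => forall d, sat M (upd env x d) G
  | Ex x G => exists d, sat M (upd env x d) G
  end.

Definition entails (F G : form) : Prop :=
  forall (M : model) (env : nat -> dom M), sat M env F -> sat M env G.

(* The implication F^*(e_c) -> F holds for every formula, since each atom
   u_p(t) becomes p(t) /\ in_c(t).  For the converse, strip the quantifier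
   prefix and prove M -> M^*(e_c) for the matrix M by induction, under the
   invariant that every variable with an unprotected occurrence in M denotes
   some constant of c: then every strictly positive atom p(t) of M satisfies
   in_c(t).  At an implication G -> H the invariant is re-established for H,
   because a true antecedent G^*(e_c) forces each x in RV(G) to denote a
   constant of c.  In a semi-safe sentence no variable is unprotected, so the
   invariant holds vacuously. *)

From Stdlib Require Import List Arith Bool.

Lemma existsb_eqb_In (x : nat) (l : list nat) :
  existsb (Nat.eqb x) l = true <-> In x l.
Proof.
  rewrite existsb_exists. split.
  - intros [y [Hy E]]. apply Nat.eqb_eq in E. subst. exact Hy.
  - intros H. exists x. split; [exact H | apply Nat.eqb_refl].
Qed.

Lemma sat_big_and (M : model) (env : nat -> dom M) (l : list form) :
  sat M env (big_and l) <-> forall A, In A l -> sat M env A.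
Proof.
  induction l as [|A [|B l] IH].
  - simpl. split; [intros _ A [] | intros _ H; exact H].
  - simpl. split; [intros H C [<- | []]; exact H | intros H; apply H; auto].
  - change (sat M env (And A (big_and (B :: l))) <->
            forall C, In C (A :: B :: l) -> sat M env C).
    simpl sat. rewrite IH. split.
    + intros [HA Hl] C [<- | HC]; auto.
    + intros H. split; [apply H; left | intros C HC; apply H; right]; auto.
Qed.

Lemma sat_big_or (M : model) (env : nat -> dom M) (l : list form) :
  sat M env (big_or l) <-> exists A, In A l /\ sat M env A.
Proof.
  induction l as [|A [|B l] IH].
  - simpl. split; [intros [] | intros [A [[] _]]].
  - simpl. split;
      [intros H; exists A; auto | intros [C [[<- | []] H]]; exact H].
  - change (sat M env (Or A (big_or (B :: l))) <->
            exists C, In C (A :: B :: l) /\ sat M env C).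
    simpl sat. rewrite IH. split.
    + intros [HA | [C [HC H]]]; [exists A | exists C]; simpl; auto.
    + intros [C [[<- | HC] H]]; [left; exact H | right; exists C; auto].
Qed.

Definition named_in (M : model) (c : list nat) (d : dom M) : Prop :=
  exists k, In k c /\ d = cst M k.

Lemma sat_in_c (M : model) (env : nat -> dom M) (c : list nat)
    (ts : list term) :
  sat M env (in_c c ts) <-> forall t, In t ts -> named_in M c (teval M env t).
Proof.
  unfold in_c. rewrite sat_big_and. split.
  - intros H t Ht.
    destruct (proj1 (sat_big_or _ _ _) (H _ (in_map _ _ _ Ht))) as [A [HA HsA]].
    apply in_map_iff in HA. destruct HA as [k [<- Hk]].
    exists k. auto.
  - intros H A HA. apply in_map_iff in HA. destruct HA as [t [<- Ht]].
    apply sat_big_or. destruct (H t Ht) as [k [Hk E]].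
    exists (Eq t (Cst k)).
    split; [apply (in_map (fun k => Eq t (Cst k))) | ]; auto.
Qed.

Lemma subst_e_pvar_free (c : list nat) (G : form) :
  pvar_free G -> subst_e c G = G.
Proof.
  induction G; simpl; intros Hp; try tauto; try (f_equal; tauto).
Qed.

Lemma sat_star_e_sound (M : model) (c : list nat) (G : form) :
  pvar_free G -> forall env, sat M env (star_e c G) -> sat M env G.
Proof.
  unfold star_e.
  induction G; simpl; intros Hp env H; try tauto.
  - destruct Hp, H. split; auto.
  - destruct Hp, H; [left | right]; auto.
  - destruct Hp, H as [_ H]. rewrite !subst_e_pvar_free in H by assumption.
    exact H.
  - intros d. apply IHG; auto.
  - destruct H as [d H]. exists d. apply IHG; auto.
Qed.

Lemma in_c_named_var (M : model) (env : nat -> dom M) (c : list nat)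
    (ts : list term) (x : nat) :
  sat M env (in_c c ts) -> In x (flat_map term_vars ts) -> named_in M c (env x).
Proof.
  intros H Hx. apply in_flat_map in Hx. destruct Hx as [[y | k] [Ht Hx]].
  - destruct Hx as [<- | []]. exact (proj1 (sat_in_c _ _ _ _) H _ Ht).
  - destruct Hx.
Qed.

Lemma restricted_var_named (M : model) (env : nat -> dom M) (c : list nat)
    (x : nat) (G : form) :
  in_RV x G = true -> incl (consts G) c ->
  sat M env (star_e c G) -> named_in M c (env x).
Proof.
  unfold star_e.
  induction G; simpl; intros Hrv Hc Hs; try discriminate.
  - destruct t as [n | k], t0 as [m | l]; simpl in *; try discriminate;
      rewrite orb_false_r, Nat.eqb_eq in Hrv; subst.
    + exists l. split; [apply Hc; left | ]; auto.
    + exists k. split; [apply Hc; left | ]; auto.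
  - apply existsb_eqb_In in Hrv. eapply in_c_named_var; [apply Hs | exact Hrv].
  - apply existsb_eqb_In in Hrv. eapply in_c_named_var; [apply Hs | exact Hrv].
  - apply incl_app_inv in Hc. destruct Hs as [H1 H2].
    apply orb_true_iff in Hrv. destruct Hrv; [apply IHG1 | apply IHG2]; tauto.
  - apply incl_app_inv in Hc. apply andb_true_iff in Hrv.
    destruct Hs; [apply IHG1 | apply IHG2]; tauto.
Qed.

Lemma sat_star_e_complete_qf (M : model) (env : nat -> dom M) (c : list nat)
    (G : form) :
  quantifier_free G -> pvar_free G -> incl (consts G) c ->
  (forall x, unprotected x G = true -> named_in M c (env x)) ->
  sat M env G -> sat M env (star_e c G).
Proof.
  unfold star_e.
  induction G; simpl; intros Hq Hp Hc Hu Hs; try tauto.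
  - split; [exact Hs | ]. apply sat_in_c. intros [y | k] Ht.
    + apply Hu, existsb_eqb_In, in_flat_map. exists (Var y). simpl; auto.
    + exists k. split; [apply Hc, in_flat_map; exists (Cst k); simpl | ]; auto.
  - apply incl_app_inv in Hc. destruct Hq, Hp, Hs, Hc. split.
    + apply IHG1; auto. intros x Hx. apply Hu. rewrite Hx. reflexivity.
    + apply IHG2; auto. intros x Hx. apply Hu. rewrite Hx. apply orb_true_r.
  - apply incl_app_inv in Hc. destruct Hq, Hp, Hc. destruct Hs; [left | right].
    + apply IHG1; auto. intros x Hx. apply Hu. rewrite Hx. reflexivity.
    + apply IHG2; auto. intros x Hx. apply Hu. rewrite Hx. apply orb_true_r.
  - apply incl_app_inv in Hc. destruct Hq, Hp, Hc.
    split; [ | rewrite !subst_e_pvar_free by assumption; exact Hs].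
    intros HG1. apply IHG2; auto.
    + intros x Hx. destruct (in_RV x G1) eqn:E.
      * eapply restricted_var_named; eauto.
      * apply Hu. rewrite E. exact Hx.
    + apply Hs. eapply sat_star_e_sound; eauto.
Qed.

Lemma unprotected_free_vars (x : nat) (G : form) :
  quantifier_free G -> unprotected x G = true -> In x (free_vars G).
Proof.
  induction G; simpl; intros Hq Hu; try discriminate; try tauto;
    try (apply existsb_eqb_In; exact Hu).
  - apply in_or_app. apply orb_true_iff in Hu. tauto.
  - apply in_or_app. apply orb_true_iff in Hu. tauto.
  - apply in_or_app. destruct (in_RV x G1); [discriminate | tauto].
Qed.

Lemma free_vars_prenex (x : nat) (pre : list (quant * nat)) (G : form) :
  In x (free_vars G) -> In x (free_vars (prenex pre G)) \/ In x (map snd pre).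
Proof.
  induction pre as [|[q y] pre IH]; simpl; intros H; [auto | ].
  destruct (IH H) as [H1 | H1]; [ | auto].
  destruct (Nat.eqb x y) eqn:E.
  - apply Nat.eqb_eq in E. auto.
  - left. destruct q; simpl; apply filter_In; rewrite E; auto.
Qed.

Lemma free_vars_matrix_in_prefix (x : nat) (pre : list (quant * nat))
    (G : form) :
  sentence (prenex pre G) -> In x (free_vars G) -> In x (map snd pre).
Proof.
  intros Hsent H.
  destruct (free_vars_prenex x pre G H) as [H1 | H1]; [ | exact H1].
  unfold sentence in Hsent. rewrite Hsent in H1. destruct H1.
Qed.

Lemma consts_prenex (pre : list (quant * nat)) (G : form) :
  consts (prenex pre G) = consts G.
Proof. induction pre as [|[[|] y] pre IH]; simpl; auto. Qed.

Lemma pvar_free_prenex (pre : list (quant * nat)) (G : form) :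
  pvar_free (prenex pre G) -> pvar_free G.
Proof. induction pre as [|[[|] y] pre IH]; simpl; auto. Qed.

Lemma star_e_prenex (c : list nat) (pre : list (quant * nat)) (G : form) :
  star_e c (prenex pre G) = prenex pre (star_e c G).
Proof.
  unfold star_e. induction pre as [|[[|] y] pre IH]; simpl; f_equal; auto.
Qed.

Lemma sat_prenex_mono (M : model) (pre : list (quant * nat)) (G G' : form) :
  (forall env, sat M env G -> sat M env G') ->
  forall env, sat M env (prenex pre G) -> sat M env (prenex pre G').
Proof.
  intros HG. induction pre as [|[[|] y] pre IH]; simpl; auto.
  intros env [d H]. exists d. apply IH, H.
Qed.

Theorem lemma4 (F : form) (c : list nat) :
  pvar_free F ->
  semi_safe F ->
  (forall k, In k (consts F) -> In k c) ->
  entails F (star_e c F).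
Proof.
  intros Hp [Hsent [pre [G [-> [Hq [_ Hprotected]]]]]] Hc M env.
  rewrite star_e_prenex. revert env. apply sat_prenex_mono.
  intros env. apply sat_star_e_complete_qf; auto.
  - exact (pvar_free_prenex pre G Hp).
  - rewrite <- (consts_prenex pre G). exact Hc.
  - intros x Hx. exfalso.
    assert (Hpre := free_vars_matrix_in_prefix x pre G Hsent
                      (unprotected_free_vars x G Hq Hx)).
    rewrite (Hprotected x Hpre) in Hx. discriminate.
Qed.
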